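(* Let $\sigma$ be a primitive substitution over a finite alphabet $\mathcal{A}$ and let $(X_\sigma,T)$ be the associated subshift. Let $v\in\mathcal{L}(X_\sigma)$ and suppose its frequency is rational, $\mu_v=p_v/q_v$ written in irreducible form. Suppose that $(X_\sigma,T)$ is balanced on $v$. Then: (1) For each $a\in\mathcal{A}$ and each return word $w$ to $a$, $q_v$ divides $|\sigma^n(w)|$ for all $n$ large enough. In particular, if $aa\in\mathcal{L}_2(X_\sigma)$, then $q_v$ divides $|\sigma^n(a)|$ for all $n$ large enough. (2) Let $a\in\mathcal{A}$ and suppose there exist $b,c\in\mathcal{A}$ such that $bac\in\mathcal{L}(X_\sigma)$ and $bc\in\mathcal{L}(X_\sigma)$. Then $q_v$ divides $|\sigma^n(a)|$ for all $n$ large enough.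
   Context: A substitution $\sigma$ on a finite alphabet $\mathcal{A}$ is a non-erasing morphism of the free monoid $\mathcal{A}^*$. Its substitution matrix $M_\sigma$ has entries $M_\sigma(a,b)=|\sigma(b)|_a$ (number of occurrences of $a$ in $\sigma(b)$); $\sigma$ is primitive if some power of $M_\sigma$ has all entries positive. $X_\sigma$ is the set of $x\in\mathcal{A}^{\mathbb Z}$ such that every finite factor of $x$ is a factor of $\sigma^n(a)$ for some $a\in\mathcal{A}$, $n\in\mathbb{N}$; $T$ is the shift. $(X_\sigma,T)$ is minimal and uniquely ergodic with invariant probability measure $\mu$. $\mathcal{L}(X_\sigma)$ is the set of finite factors of elements of $X_\sigma$, $\mathcal{L}_n(X_\sigma)$ those of length $n$. The frequency of $v$ is $\mu_v=\mu([v])$ where $[v]=\{x\in X_\sigma: x_0\cdots x_{|v|-1}=v\}$. For finite words, $|w|$ is the length and $|w|_v$ the number of occurrences of $v$ in $w$. $(X_\sigma,T)$ is balanced on $v$ if there is $C_v$ with $||w|_v-|w'|_v|\le C_v$ for all $w,w'\in\mathcal{L}(X_\sigma)$ with $|w|=|w'|$. A return word to the letter $a$ is a word $w$ such that $wa\in\mathcal{L}(X_\sigma)$ and $a$ is a prefix of $wa$. *)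

From HB Require Import structures.
From mathcomp Require Import all_boot all_order all_algebra.
From mathcomp Require Import reals.
Set Implicit Arguments. Unset Strict Implicit. Unset Printing Implicit Defensive.
Import Order.TTheory GRing.Theory Num.Theory.

Section Subst.
Variable (A : finType) (sigma : A -> seq A).

Definition subst_word (w : seq A) : seq A := flatten (map sigma w).
Definition subst_iter (n : nat) (w : seq A) : seq A := iter n subst_word w.

Definition nonerasing : Prop := forall a : A, 0 < size (sigma a).

Definition subst_matrix : 'M[int]_#|A| :=
  \matrix_(i < #|A|, j < #|A|) Posz (count_mem (enum_val i) (sigma (enum_val j))).

Definition primitive : Prop :=
  exists k : nat, forall i j : 'I_#|A|, (0 < (subst_matrix ^+ k) i j)%R.

Definition in_sigma_lang (u : seq A) : Prop :=
  exists (n : nat) (a : A), infix u (subst_iter n [:: a]).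

Definition factor_at (x : int -> A) (i : int) (n : nat) : seq A :=
  mkseq (fun k => x (i + k%:Z)%R) n.

Definition in_Xsigma (x : int -> A) : Prop :=
  forall (i : int) (n : nat), in_sigma_lang (factor_at x i n).

Definition inL (u : seq A) : Prop :=
  exists x : int -> A, in_Xsigma x /\ exists i : int, factor_at x i (size u) = u.

(* |w|_v : number of (possibly overlapping) occurrences of v in w *)
Definition occ (v w : seq A) : nat :=
  count (fun i => take (size v) (drop i w) == v) (iota 0 (size w - size v).+1).

Definition balanced_on (v : seq A) : Prop :=
  exists C : nat, forall w w' : seq A, inL w -> inL w' -> size w = size w' ->
    (`| Posz (occ v w) - Posz (occ v w') | <= Posz C)%R.

(* A shift-invariant Borel probability measure on X_sigma, described by its
   values on cylinders: mu u = mu([u]) with [u] = {x in X_sigma | x_0..x_{|u|-1} = u}.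
   (By Kolmogorov extension these data are exactly such measures.) *)
Definition invariant_prob_on_X (R : realType) (mu : seq A -> R) : Prop :=
  [/\ mu [::] = 1%R,
      forall u, (0 <= mu u)%R,
      forall u, ~ inL u -> mu u = 0%R,
      forall u, mu u = (\sum_(a : A) mu (rcons u a))%R
    & forall u, mu u = (\sum_(a : A) mu (a :: u))%R    (* mu(T^-1 [u]) = mu([u]) *) ].

Definition return_word (a : A) (w : seq A) : Prop :=
  inL (rcons w a) /\ prefix [:: a] (rcons w a).

Definition eventually_divides (q : nat) (w : seq A) : Prop :=
  exists N : nat, forall n : nat, N <= n -> q %| size (subst_iter n w).

End Subst.

(* Averaging the balance condition against mu shows that every u in L(X_sigma)
   with |u| >= |v| has |u|_v within a bounded distance of its expected value
   (|u| - |v| + 1) mu_v.  Hence the integer discrepancy q |u|_v - (|u| - |v| + 1) p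
   is bounded on L(X_sigma) and is maximal at some word us and minimal at some ul.
   Let Z contain both us and ul and occur in a word of L(X_sigma) at positions
   i <= j.  The number of occurrences of v starting in [i + c, j + c) does not
   depend on the offset c inside Z; comparing the window ending with the copy of
   us (resp. ul) at j + c with us (resp. ul) itself, maximality and minimality
   squeeze q times this number to (j - i) p, so q divides j - i.  By primitivity
   such a Z occurs in sigma^n(a) for every letter a once n is large.  As
   L(X_sigma) is stable under sigma, sigma^n(wa), sigma^n(bac) and sigma^n(bc) lie
   in it; the copies of Z coming from the letters at the ends are |sigma^n(w)|
   apart in the first word, and their distances in the last two differ by
   |sigma^n(a)|. *)

From HB Require Import structures.
From mathcomp Require Import all_boot all_order all_algebra.
From mathcomp Require Import reals boolp.
From mathcomp Require Import zify ring lra.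
Import Order.TTheory GRing.Theory Num.Theory.
Set Implicit Arguments. Unset Strict Implicit. Unset Printing Implicit Defensive.

Lemma bounded_attains_max (T : Type) (P : T -> Prop) (f : T -> int) (B : nat) :
  (exists t, P t) -> (forall t, P t -> `|f t| <= B)%R ->
  exists2 t, P t & forall t', P t' -> (f t' <= f t)%R.
Proof.
move=> [t0 Pt0] f_bnd.
pose Q n := `[< exists2 t, P t & (f t + B)%R = Posz n >].
have Q_f t : P t -> Q (absz (f t + B)%R).
  by move=> Pt; apply/asboolP; exists t => //; have := f_bnd t Pt; lia.
have ubQ n : Q n -> n <= B + B by case/asboolP=> t Pt ft; have := f_bnd t Pt; lia.
case: (ex_maxnP (ex_intro Q _ (Q_f t0 Pt0)) ubQ) => n /asboolP[t Pt ft] n_max.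
exists t => // t' Pt'; have := n_max _ (Q_f t' Pt'); have := f_bnd t' Pt'; lia.
Qed.

Lemma bounded_attains_min (T : Type) (P : T -> Prop) (f : T -> int) (B : nat) :
  (exists t, P t) -> (forall t, P t -> `|f t| <= B)%R ->
  exists2 t, P t & forall t', P t' -> (f t <= f t')%R.
Proof.
move=> exP f_bnd.
have [t Pt t_max] : exists2 t, P t & forall t', P t' -> (- f t' <= - f t)%R.
  by apply: bounded_attains_max exP _ => t Pt; rewrite normrN; apply: f_bnd.
by exists t => // t' /t_max; rewrite lerN2.
Qed.

Section OccursAt.
Variable T : Type.

Definition occurs_at (u Y : seq T) (i : nat) : Prop :=
  i + size u <= size Y /\ take (size u) (drop i Y) = u.

Lemma occurs_at_cat (l u r : seq T) : occurs_at u (l ++ u ++ r) (size l).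
Proof. by split; [rewrite !size_cat leq_add2l leq_addr | rewrite drop_size_cat // take_size_cat]. Qed.

Lemma take_drop_take_drop (Y : seq T) i m r k : r + k <= m ->
  take k (drop r (take m (drop i Y))) = take k (drop (i + r) Y).
Proof. by move=> le_m; rewrite addnC -drop_drop !take_drop take_takel //; lia. Qed.

Lemma take_drop_occurs_at (Z Y : seq T) i r k : occurs_at Z Y i -> r + k <= size Z ->
  take k (drop (i + r) Y) = take k (drop r Z).
Proof. by case=> _ {2}<- le_Z; rewrite take_drop_take_drop. Qed.

Lemma occurs_at_trans (u Z Y : seq T) a i :
  occurs_at u Z a -> occurs_at Z Y i -> occurs_at u Y (i + a).
Proof.
move=> [le_a Zu] [le_i Zi]; split; first lia.
by rewrite (take_drop_occurs_at (conj le_i Zi)).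
Qed.

End OccursAt.

Section SubstMorphism.
Variables (A : finType) (sigma : A -> seq A).
Local Notation sw := (subst_word sigma).
Local Notation si := (subst_iter sigma).

Lemma subst_word_cat s t : sw (s ++ t) = sw s ++ sw t.
Proof. by rewrite /subst_word map_cat flatten_cat. Qed.

Lemma subst_iterS n s : si n.+1 s = sw (si n s).
Proof. by []. Qed.

Lemma subst_iterD m n s : si (m + n) s = si m (si n s).
Proof. by rewrite /subst_iter iterD. Qed.

Lemma subst_iter_cat n s t : si n (s ++ t) = si n s ++ si n t.
Proof. by elim: n => // n IH; rewrite !subst_iterS IH subst_word_cat. Qed.

Lemma subst_iter_cons n x s : si n (x :: s) = si n [:: x] ++ si n s.
Proof. by rewrite -cat1s subst_iter_cat. Qed.

Lemma subst_iter_nil n : si n [::] = [::].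
Proof. by elim: n => // n IH; rewrite subst_iterS IH. Qed.

Lemma infix_subst_word s t : infix s t -> infix (sw s) (sw t).
Proof.
case/infixP=> [l [r ->]]; rewrite !subst_word_cat.
by apply/infixP; exists (sw l), (sw r).
Qed.

Lemma infix_subst_iter n s t : infix s t -> infix (si n s) (si n t).
Proof.
case/infixP=> [l [r ->]]; rewrite !subst_iter_cat.
by apply/infixP; exists (si n l), (si n r).
Qed.

Lemma in_sigma_lang_infix u w :
  infix u w -> in_sigma_lang sigma w -> in_sigma_lang sigma u.
Proof. by move=> uw [n [a wa]]; exists n, a; apply: infix_trans uw wa. Qed.

Lemma in_sigma_lang_subst_word u :
  in_sigma_lang sigma u -> in_sigma_lang sigma (sw u).
Proof. by case=> n [a ua]; exists n.+1, a; apply: infix_subst_word. Qed.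

Hypothesis ne : nonerasing sigma.

Lemma leq_size_subst_word s : size s <= size (sw s).
Proof.
elim: s => //= x s IH; rewrite /subst_word /= size_cat.
by have := ne x; rewrite -/(sw s); lia.
Qed.

Lemma leq_size_subst_iter n s : size s <= size (si n s).
Proof. by elim: n => //= n IH; apply: leq_trans IH (leq_size_subst_word _). Qed.

End SubstMorphism.

(** * Stability of the language under the substitution *)

Section Factors.
Variables (A : finType) (y : int -> A).

Lemma size_factor_at (i : int) n : size (factor_at y i n) = n.
Proof. exact: size_mkseq. Qed.

Lemma factor_at_cat (i : int) m n :
  factor_at y i (m + n) = factor_at y i m ++ factor_at y (i + m%:Z)%R n.
Proof.
apply: (@eq_from_nth _ (y 0%R)); first by rewrite size_cat !size_mkseq.
move=> k; rewrite size_mkseq => hk; rewrite nth_cat size_mkseq.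
case: ltnP => h; rewrite !nth_mkseq //; last by lia.
by congr y; rewrite -addrA -PoszD subnKC.
Qed.

Lemma factor_at_shift (i : int) k n N : k + n <= N ->
  factor_at y (i + k%:Z)%R n = take n (drop k (factor_at y i N)).
Proof.
move=> hN; rewrite -(subnKC hN) -addnA factor_at_cat drop_size_cat ?size_factor_at //.
by rewrite factor_at_cat take_size_cat ?size_factor_at.
Qed.

End Factors.

Section SubstSequence.
Variables (A : finType) (sigma : A -> seq A).
Hypothesis ne : nonerasing sigma.
Local Notation sw := (subst_word sigma).

Variable x : int -> A.
Local Notation left m := (factor_at x (GRing.opp (Posz m)) m).
Local Notation right n := (factor_at x 0%R n).

(* sigma(x), placed so that sigma(x_0) starts at index 0: index t >= 0 is read
   in sigma(x_0 ... x_t), index -(t+1) from the end of sigma(x_{-t-1} ... x_{-1});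
   both words are long enough because sigma is non-erasing. *)
Definition subst_seq (z : int) : A :=
  match z with
  | Posz t => nth (x 0%R) (sw (right t.+1)) t
  | Negz t => nth (x 0%R) (sw (left t.+1)) (size (sw (left t.+1)) - t.+1)
  end.

Lemma factor_at_left_right m n :
  factor_at x (- m%:Z)%R (m + n) = left m ++ right n.
Proof. by rewrite factor_at_cat addNr. Qed.

Lemma nth_subst_word_right n1 n2 r :
  r < size (sw (right n1)) -> r < size (sw (right n2)) ->
  nth (x 0%R) (sw (right n1)) r = nth (x 0%R) (sw (right n2)) r.
Proof.
wlog le12 : n1 n2 / n1 <= n2.
  by move=> H h1 h2; case: (leqP n1 n2) => h; [|symmetry]; apply: H => //; apply: ltnW.
by move=> h1 _; rewrite -(subnKC le12) factor_at_cat subst_word_cat nth_cat h1.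
Qed.

Lemma nth_subst_word_left m1 m2 r : 0 < r ->
  r <= size (sw (left m1)) -> r <= size (sw (left m2)) ->
  nth (x 0%R) (sw (left m1)) (size (sw (left m1)) - r) =
  nth (x 0%R) (sw (left m2)) (size (sw (left m2)) - r).
Proof.
wlog le12 : m1 m2 / m1 <= m2.
  by move=> H h0 h1 h2; case: (leqP m1 m2) => h; [|symmetry]; apply: H => //; apply: ltnW.
move=> h0 h1 _.
have -> : left m2 = factor_at x (- m2%:Z)%R (m2 - m1) ++ left m1.
  by rewrite -{2}(subnK le12) factor_at_cat; congr (_ ++ factor_at _ _ _); lia.
rewrite subst_word_cat nth_cat size_cat.
set s1 := sw (left m1) in h1 *; set s2 := sw _.
by rewrite ltnNge (_ : size s2 <= _ = true); [congr nth|]; lia.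
Qed.

Lemma factor_at_subst_seq m n :
  factor_at subst_seq (- (size (sw (left m)))%:Z)%R
    (size (sw (factor_at x (- m%:Z)%R (m + n)))) = sw (factor_at x (- m%:Z)%R (m + n)).
Proof.
set P := size (sw (left m)).
apply: (@eq_from_nth _ (x 0%R)); first by rewrite size_factor_at.
move=> t; rewrite size_factor_at => ht; rewrite nth_mkseq //.
move: ht; rewrite factor_at_left_right subst_word_cat size_cat nth_cat -/P => ht.
case: (ltnP t P) => htP.
- have -> : (- P%:Z + t%:Z)%R = Negz (P - t).-1 by rewrite NegzE; lia.
  rewrite /subst_seq prednK; last by lia.
  rewrite [in RHS](_ : t = P - (P - t)); last by lia.
  apply: nth_subst_word_left; rewrite -/P; try lia.
  by have := leq_size_subst_word ne (left (P - t)); rewrite size_factor_at; lia.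
- have -> : (- P%:Z + t%:Z)%R = Posz (t - P) by lia.
  apply: nth_subst_word_right; last by lia.
  by have := leq_size_subst_word ne (right (t - P).+1); rewrite size_factor_at; lia.
Qed.

Lemma subst_seq_in_Xsigma : in_Xsigma sigma x -> in_Xsigma sigma subst_seq.
Proof.
move=> Xx j n; set m := absz j; set P := size (sw (left m)).
set W := sw (factor_at x (- m%:Z)%R (m + (m + n))).
have hmP : m <= P by have := leq_size_subst_word ne (left m); rewrite size_factor_at.
have hW : P + (m + n) <= size W.
  rewrite /W factor_at_left_right subst_word_cat size_cat leq_add2l.
  by have := leq_size_subst_word ne (right (m + n)); rewrite size_factor_at.
have -> : factor_at subst_seq j n = take n (drop (absz (j + P%:Z)%R) W).
  rewrite /W -(factor_at_subst_seq m (m + n)) -/P -/W -factor_at_shift.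
    by congr factor_at; lia.
  by rewrite /m; lia.
apply: (@in_sigma_lang_infix _ _ _ W).
  exact: infix_trans (infix_take _ _) (infix_drop _ _).
exact/in_sigma_lang_subst_word/Xx.
Qed.

Lemma subst_word_factor_at i n :
  exists j, factor_at subst_seq j (size (sw (factor_at x i n))) = sw (factor_at x i n).
Proof.
set m := absz i; set d := absz (i + m%:Z)%R.
set big := factor_at x (- m%:Z)%R (m + (m + n)).
have -> : factor_at x i n = take n (drop d big).
  by rewrite -factor_at_shift; [congr factor_at|]; rewrite /d /m; lia.
have Ebig : sw big = sw (take d big) ++ sw (take n (drop d big)) ++ sw (drop n (drop d big)).
  by rewrite -!subst_word_cat !cat_take_drop.
have Wbig := factor_at_subst_seq m (m + n); rewrite -/big in Wbig.
exists (- Posz (size (sw (left m))) + Posz (size (sw (take d big))))%R.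
rewrite (factor_at_shift _ _ _ (N := size (sw big))).
  by rewrite Wbig Ebig drop_size_cat // take_size_cat.
by rewrite Ebig !size_cat leq_add2l leq_addr.
Qed.

End SubstSequence.

Section LanguageClosure.
Variables (A : finType) (sigma : A -> seq A).
Hypothesis ne : nonerasing sigma.

Lemma inL_subst_word u : inL sigma u -> inL sigma (subst_word sigma u).
Proof.
case=> y [Xy [i <-]]; have [j hj] := subst_word_factor_at ne y i (size u).
by exists (subst_seq sigma y); split; [exact: subst_seq_in_Xsigma | exists j].
Qed.

Lemma inL_subst_iter n u : inL sigma u -> inL sigma (subst_iter sigma n u).
Proof. by elim: n => // n IH /IH /inL_subst_word. Qed.

Lemma inL_take_drop u i m : inL sigma u -> i + m <= size u -> inL sigma (take m (drop i u)).
Proof.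
case=> y [Xy [j <-]]; rewrite size_factor_at => hm.
exists y; split=> //; exists (j + i%:Z)%R.
by rewrite size_takel ?size_drop ?size_factor_at -?factor_at_shift //; lia.
Qed.

Lemma in_sigma_lang_inL u : inL sigma u -> in_sigma_lang sigma u.
Proof. by case=> y [Xy [i <-]]; apply: Xy. Qed.

End LanguageClosure.

(** * Primitivity *)

Section Primitivity.
Variables (A : finType) (sigma : A -> seq A).
Local Notation si := (subst_iter sigma).

Lemma count_subst_word (a : A) s :
  (Posz (count_mem a (subst_word sigma s)) = \sum_(l < #|A|)
    Posz (count_mem (enum_val l) s) * Posz (count_mem a (sigma (enum_val l))))%R.
Proof.
elim: s => [|b s IH]; first by rewrite big1 // => l _; rewrite mul0r.
rewrite /subst_word /= count_cat PoszD -/(subst_word sigma s) IH.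
under [RHS]eq_bigr => l _ do rewrite PoszD mulrDl.
rewrite big_split /=; congr (_ + _)%R.
rewrite (bigD1 (enum_rank b)) //= enum_rankK eqxx mul1r.
rewrite big1 ?addr0 // => l; rewrite -(inj_eq enum_val_inj) enum_rankK eq_sym.
by move/negbTE->; rewrite mul0r.
Qed.

Lemma subst_matrix_exp k (i j : 'I_#|A|) :
  (subst_matrix sigma ^+ k)%R i j = Posz (count_mem (enum_val i) (si k [:: enum_val j])).
Proof.
elim: k i j => [|k IH] i j.
  by rewrite expr0 mxE /= (inj_eq enum_val_inj) eq_sym addn0; case: eqP.
rewrite exprS mxE subst_iterS count_subst_word.
by apply: eq_bigr => l _; rewrite IH mxE mulrC.
Qed.

Hypothesis ne : nonerasing sigma.

Lemma primitive_mem_subst_iter : primitive sigma ->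
  exists k, forall n, k <= n -> forall a b : A, b \in si n [:: a].
Proof.
case=> k pos_k; exists k => n le_kn a b.
have mem_k c : b \in si k [:: c].
  by have := pos_k (enum_rank b) (enum_rank c); rewrite subst_matrix_exp !enum_rankK -has_pred1 has_count; lia.
rewrite -(subnKC le_kn) subst_iterD.
case E: (si (n - k) [:: a]) => [|c s].
  by have := leq_size_subst_iter ne (n - k) [:: a]; rewrite E.
by rewrite subst_iter_cons mem_cat mem_k.
Qed.

Lemma primitive_infix_subst_iter u : primitive sigma -> in_sigma_lang sigma u ->
  exists N, forall n (a : A), N <= n -> infix u (si n [:: a]).
Proof.
move=> prim [m [b ub]]; have [k mem_k] := primitive_mem_subst_iter prim.
exists (k + m) => n a le_n; have le_mn : m <= n by lia.
rewrite -(subnKC le_mn) subst_iterD; apply/(infix_trans ub)/infix_subst_iter.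
by rewrite infix1s mem_k //; lia.
Qed.

End Primitivity.

(** * Averaging against the invariant measure *)

Section SumWords.
Variables (A : finType) (R : realType).
Local Open Scope ring_scope.

Fixpoint sum_words (n : nat) (g : seq A -> R) : R :=
  if n is n'.+1 then \sum_(a : A) sum_words n' (fun r => g (a :: r)) else g [::].

Lemma eq_sum_words n g h :
  (forall u, size u = n -> g u = h u) -> sum_words n g = sum_words n h.
Proof.
elim: n g h => [|n IH] g h gh /=; first exact: gh.
by apply: eq_bigr => a _; apply: IH => u su; apply: gh; rewrite /= su.
Qed.

Lemma ler_sum_words n g h :
  (forall u, size u = n -> g u <= h u) -> sum_words n g <= sum_words n h.
Proof.
elim: n g h => [|n IH] g h gh /=; first exact: gh.
by apply: ler_sum => a _; apply: IH => u su; apply: gh; rewrite /= su.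
Qed.

Lemma ler_norm_sum_words n g : `|sum_words n g| <= sum_words n (fun u => `|g u|).
Proof.
elim: n g => [|n IH] g //=.
by apply: le_trans (ler_norm_sum _ _ _) (ler_sum _ _) => a _; apply: IH.
Qed.

Lemma sum_wordsD n g h : sum_words n (fun u => g u + h u) = sum_words n g + sum_words n h.
Proof.
elim: n g h => [|n IH] g h //=.
by rewrite -big_split; apply: eq_bigr => a _; rewrite IH.
Qed.

Lemma sum_wordsB n g h : sum_words n (fun u => g u - h u) = sum_words n g - sum_words n h.
Proof.
elim: n g h => [|n IH] g h //=.
by rewrite -sumrB; apply: eq_bigr => a _; rewrite IH.
Qed.

Lemma sum_wordsZ n c g : sum_words n (fun u => c * g u) = c * sum_words n g.
Proof.
elim: n g => [|n IH] g //=.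
by rewrite mulr_sumr; apply: eq_bigr => a _; rewrite IH.
Qed.

Lemma sum_words0 n : sum_words n (fun=> 0) = 0.
Proof. by elim: n => //= n IH; rewrite big1. Qed.

Lemma sum_words_sum n (I : finType) (g : I -> seq A -> R) :
  sum_words n (fun u => \sum_i g i u) = \sum_i sum_words n (g i).
Proof.
elim: n g => [|n IH] g //=.
by rewrite exchange_big; apply: eq_bigr => a _; apply: IH.
Qed.

Lemma sum_words_cat i j g :
  sum_words (i + j) g = sum_words i (fun l => sum_words j (fun r => g (l ++ r))).
Proof.
elim: i g => [|i IH] g //=.
by apply: eq_bigr => a _; rewrite IH.
Qed.

Lemma sum_words_rcons n g :
  sum_words n.+1 g = sum_words n (fun l => \sum_a g (rcons l a)).
Proof.
rewrite -addn1 sum_words_cat; apply: eq_sum_words => l _ /=.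
by apply: eq_bigr => a _; rewrite cats1.
Qed.

Lemma sum_words_pick (v : seq A) h :
  sum_words (size v) (fun u => if u == v then h u else 0) = h v.
Proof.
elim: v h => [|b v IH] h //=.
rewrite (bigD1 b) //= big1 ?addr0.
  by rewrite -(IH (fun r => h (b :: r))); apply: eq_sum_words => u _; rewrite eqseq_cons eqxx.
move=> a /negbTE ab.
by under eq_sum_words => u _ do rewrite eqseq_cons ab /=; apply: sum_words0.
Qed.

End SumWords.

Section CylinderMeasure.
Variables (A : finType) (sigma : A -> seq A) (R : realType) (mu : seq A -> R).
Hypothesis mu_inv : invariant_prob_on_X sigma mu.
Local Open Scope ring_scope.

Lemma sum_words_mu_catr s n : sum_words n (fun r => mu (s ++ r)) = mu s.
Proof.
case: mu_inv => _ _ _ mu_rcons _; elim: n => [|n IH]; first by rewrite /= cats0.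
rewrite sum_words_rcons -[RHS]IH; apply: eq_sum_words => l _.
by rewrite [RHS]mu_rcons; apply: eq_bigr => a _; rewrite rcons_cat.
Qed.

Lemma sum_words_mu_catl s n : sum_words n (fun l => mu (l ++ s)) = mu s.
Proof.
case: mu_inv => _ _ _ _ mu_cons; elim: n => [|n IH] //=.
rewrite -(sum_words_sum n (fun a l => mu (a :: l ++ s))) -[RHS]IH.
by apply: eq_sum_words => l _; rewrite [RHS]mu_cons.
Qed.

Lemma sum_words_mu n : sum_words n mu = 1.
Proof. by case: mu_inv => <- _ _ _ _; rewrite -(sum_words_mu_catr [::] n). Qed.

Variable v : seq A.
Local Notation K := (size v).

Lemma sum_words_mu_occurs_at N r : (r + K <= N)%N ->
  sum_words N (fun u => mu u * (take K (drop r u) == v)%:R) = mu v.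
Proof.
move=> le_N; rewrite -(subnKC le_N) -addnA sum_words_cat -(sum_words_mu_catl v r).
apply: eq_sum_words => l sl; rewrite sum_words_cat -(sum_words_pick v (fun m => mu (l ++ m))).
apply: eq_sum_words => m sm.
have window t : take K (drop r (l ++ m ++ t)) = m.
  by rewrite -sl drop_size_cat // -sm take_size_cat.
under eq_sum_words => t _ do rewrite window.
case: eqP => _.
  by under eq_sum_words => t _ do rewrite mulr1 catA; apply: sum_words_mu_catr.
by under eq_sum_words => t _ do rewrite mulr0; apply: sum_words0.
Qed.

Lemma sum_words_mu_count N (s : seq nat) : (forall r, r \in s -> r + K <= N)%N ->
  sum_words N (fun u => mu u * (count (fun r => take K (drop r u) == v) s)%:R) =
  (size s)%:R * mu v.
Proof.
elim: s => [|r s IH] s_le /=.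
  by under eq_sum_words => u _ do rewrite mulr0; rewrite sum_words0 mul0r.
rewrite -add1n natrD mulrDl mul1r -IH => [|t st]; last by apply: s_le; rewrite inE st orbT.
rewrite -(sum_words_mu_occurs_at (s_le r (mem_head _ _))).
by rewrite -sum_wordsD; apply: eq_sum_words => u _; rewrite natrD mulrDr.
Qed.

Lemma sum_words_mu_occ N : (K <= N)%N ->
  sum_words N (fun u => mu u * (occ v u)%:R) = (N - K).+1%:R * mu v.
Proof.
move=> le_KN; rewrite -[in RHS](size_iota 0 (N - K).+1) -(sum_words_mu_count (N := N)).
  by apply: eq_sum_words => u su; rewrite /occ su.
by move=> r; rewrite mem_iota; lia.
Qed.

Lemma occ_deviation_le (C : nat) : (forall w w' : seq A, inL sigma w -> inL sigma w' ->
    size w = size w' -> `|Posz (occ v w) - Posz (occ v w')| <= Posz C) ->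
  forall u, inL sigma u -> (K <= size u)%N ->
  `|(occ v u)%:R - (size u - K).+1%:R * mu v| <= C%:R.
Proof.
move=> balanced u0 Lu0 le_Ku0; case: mu_inv => _ mu_ge0 mu_notL _ _.
set N := size u0.
have -> : (occ v u0)%:R - (N - K).+1%:R * mu v =
          sum_words N (fun u => mu u * ((occ v u0)%:R - (occ v u)%:R)).
  under eq_sum_words => u _ do rewrite mulrBr [mu u * _]mulrC.
  by rewrite sum_wordsB sum_wordsZ sum_words_mu mulr1 (sum_words_mu_occ le_Ku0).
have -> : C%:R = sum_words N (fun u => C%:R * mu u) by rewrite sum_wordsZ sum_words_mu mulr1.
apply: le_trans (ler_norm_sum_words _ _) (ler_sum_words _) => u su.
rewrite normrM ger0_norm // mulrC.
have [Lu|/mu_notL->] := pselect (inL sigma u); last by rewrite !mulr0.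
apply: ler_wpM2r => //.
have [le1 le2] : (occ v u0 <= occ v u + C /\ occ v u <= occ v u0 + C)%N.
  by have := balanced u0 u Lu0 Lu (esym su); lia.
by rewrite ler_norml; move: le1 le2; rewrite -!(ler_nat R) !natrD; lra.
Qed.

End CylinderMeasure.

(** * Discrepancy *)

Section Discrepancy.
Variables (A : finType) (v : seq A) (p q : nat).
Local Notation K := (size v).

Definition occ_between (Y : seq A) (a b : nat) : nat :=
  count (fun r => take K (drop r Y) == v) (iota a (b - a)).

Definition disc (u : seq A) : int := Posz (q * occ v u) - Posz ((size u - K).+1 * p).

Lemma occ_take_drop Y i m : K <= m -> i + m <= size Y ->
  occ v (take m (drop i Y)) = occ_between Y i (i + m - K).+1.
Proof.
move=> le_Km le_Y; rewrite /occ /occ_between size_takel ?size_drop; last by lia.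
rewrite (_ : _ - i = (m - K).+1); last by lia.
rewrite -{2}(addn0 i) iotaDl count_map; apply: eq_in_count => r.
by rewrite mem_iota /= => lt_r; rewrite take_drop_take_drop //; lia.
Qed.

Lemma occ_between_cat Y a b c : a <= b -> b <= c ->
  occ_between Y a c = occ_between Y a b + occ_between Y b c.
Proof.
move=> le_ab le_bc; rewrite /occ_between -count_cat (_ : c - a = (b - a) + (c - b)); last by lia.
by rewrite iotaD subnKC.
Qed.

Lemma occ_between_shift Y a b L :
  (forall r, a <= r < b -> take K (drop r Y) = take K (drop (r + L) Y)) ->
  occ_between Y a b = occ_between Y (a + L) (b + L).
Proof.
move=> shiftY; rewrite /occ_between (_ : b + L - (a + L) = b - a); last by lia.
rewrite (addnC a) iotaDl count_map; apply: eq_in_count => r.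
by rewrite mem_iota => r_ab /=; rewrite shiftY ?(addnC L) //; lia.
Qed.

Lemma disc_occurs_at Y s L u : K <= size u -> occurs_at u Y (s + L) ->
  disc (take (L + size u) (drop s Y)) =
  (disc u + Posz (q * occ_between Y s (s + L)) - Posz (L * p))%R.
Proof.
move=> le_Ku [le_Y Yu].
have occ_u : occ v u = occ_between Y (s + L) (s + L + size u - K).+1.
  by rewrite -{1}Yu occ_take_drop.
rewrite /disc occ_take_drop; [|lia|lia].
rewrite size_takel ?size_drop; last by lia.
rewrite (@occ_between_cat _ _ (s + L)) ?addnA -?occ_u; [|lia|lia].
rewrite (_ : (L + size u - K).+1 = L + (size u - K).+1); last by lia.
by rewrite mulnDr mulnDl !PoszD; ring.
Qed.

Lemma occ_between_periodic Y Z i j g d :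
  occurs_at Z Y i -> occurs_at Z Y j -> i <= j -> g <= d -> d + K <= size Z ->
  occ_between Y (i + g) (j + g) = occ_between Y (i + d) (j + d).
Proof.
move=> Zi Zj le_ij le_gd le_dZ.
have shift : occ_between Y (i + g) (i + d) = occ_between Y (j + g) (j + d).
  have -> : j + g = i + g + (j - i) by lia.
  have -> : j + d = i + d + (j - i) by lia.
  apply: occ_between_shift => r /andP[le_r lt_r].
  have -> : r + (j - i) = j + (r - i) by lia.
  rewrite -{1}(subnKC (leq_trans (leq_addr g i) le_r)).
  by rewrite (take_drop_occurs_at Zi) ?(take_drop_occurs_at Zj) //; lia.
have := @occ_between_cat Y (i + g) (j + g) (j + d).
have := @occ_between_cat Y (i + g) (i + d) (j + d).
rewrite shift; lia.
Qed.

Section Extremal.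
Variables (sigma : A -> seq A) (us ul : seq A).
Hypothesis us_max : forall u, inL sigma u -> K <= size u -> (disc u <= disc us)%R.
Hypothesis ul_min : forall u, inL sigma u -> K <= size u -> (disc ul <= disc u)%R.
Hypotheses (le_Kus : K <= size us) (le_Kul : K <= size ul).

Lemma occ_between_le_of_max Y s t : s <= t -> inL sigma Y -> occurs_at us Y t ->
  q * occ_between Y s t <= (t - s) * p.
Proof.
move=> le_st LY; rewrite -(subnKC le_st) => us_at; have [le_Y _] := us_at.
have win_L : inL sigma (take (t - s + size us) (drop s Y)) by apply: inL_take_drop LY _; lia.
have := us_max win_L; rewrite disc_occurs_at // size_takel ?size_drop; last lia.
by move/(_ (leq_trans le_Kus (leq_addl _ _))); lia.
Qed.

Lemma occ_between_ge_of_min Y s t : s <= t -> inL sigma Y -> occurs_at ul Y t ->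
  (t - s) * p <= q * occ_between Y s t.
Proof.
move=> le_st LY; rewrite -(subnKC le_st) => ul_at; have [le_Y _] := ul_at.
have win_L : inL sigma (take (t - s + size ul) (drop s Y)) by apply: inL_take_drop LY _; lia.
have := ul_min win_L; rewrite disc_occurs_at // size_takel ?size_drop; last lia.
by move/(_ (leq_trans le_Kul (leq_addl _ _))); lia.
Qed.

Hypothesis coprime_pq : coprime p q.

Lemma dvdn_occurs_at_distance Y Z a b i j :
  inL sigma Y -> occurs_at us Z a -> occurs_at ul Z b ->
  occurs_at Z Y i -> occurs_at Z Y j -> i <= j -> q %| j - i.
Proof.
move=> LY us_a ul_b Zi Zj le_ij.
have le_us := occ_between_le_of_max (leq_add le_ij (leqnn a)) LY (occurs_at_trans us_a Zj).
have ge_ul := occ_between_ge_of_min (leq_add le_ij (leqnn b)) LY (occurs_at_trans ul_b Zj).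
have periodic : occ_between Y (i + a) (j + a) = occ_between Y (i + b) (j + b).
  have [[le_aZ _] [le_bZ _]] := (us_a, ul_b).
  by case: (leqP a b) => [le_ab|/ltnW le_ba]; [|symmetry];
    apply: occ_between_periodic Zi Zj le_ij _ _; lia.
rewrite !subnDr -periodic in le_us ge_ul.
rewrite -(@Gauss_dvdl q _ p); last by rewrite coprime_sym.
by rewrite (_ : _ * p = q * occ_between Y (i + a) (j + a)) ?dvdn_mulr //; lia.
Qed.

End Extremal.

End Discrepancy.

Lemma disc_bounded (A : finType) (sigma : A -> seq A) (R : realType) (mu : seq A -> R)
    (v : seq A) (p q C : nat) :
  invariant_prob_on_X sigma mu -> 0 < q -> mu v = (p%:R / q%:R)%R ->
  (forall w w' : seq A, inL sigma w -> inL sigma w' -> size w = size w' ->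
    `|Posz (occ v w) - Posz (occ v w')| <= Posz C)%R ->
  forall u, inL sigma u -> size v <= size u -> (`|disc v p q u| <= Posz (q * C))%R.
Proof.
move=> mu_inv q_gt0 mu_v balanced u Lu le_vu.
have q_neq0 : (q%:R != 0 :> R)%R by rewrite pnatr_eq0 -lt0n.
have disc_R : ((disc v p q u)%:~R = q%:R * ((occ v u)%:R - (size u - size v).+1%:R * mu v) :> R)%R.
  by rewrite /disc intrB mu_v -!pmulrn !natrM; field.
rewrite -(ler_int R) intr_norm disc_R normrM normr_nat -pmulrn natrM ler_wpM2l //.
exact: (occ_deviation_le mu_inv balanced).
Qed.

(** * Blocks recurring at distances divisible by q *)

Section RigidBlockExists.
Variables (A : finType) (sigma : A -> seq A) (v : seq A) (p q : nat).
Local Notation si := (subst_iter sigma).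
Hypotheses (ne : nonerasing sigma) (prim : primitive sigma) (coprime_pq : coprime p q).
Variables (us ul : seq A).
Hypotheses (Lus : inL sigma us) (Lul : inL sigma ul).
Hypotheses (le_Kus : size v <= size us) (le_Kul : size v <= size ul).
Hypothesis us_max :
  forall u, inL sigma u -> size v <= size u -> (disc v p q u <= disc v p q us)%R.
Hypothesis ul_min :
  forall u, inL sigma u -> size v <= size u -> (disc v p q ul <= disc v p q u)%R.

Lemma rigid_block_exists (a0 : A) : exists Z N,
  (forall n a, N <= n -> infix Z (si n [:: a])) /\
  (forall Y0 Y1 Y2, inL sigma (Y0 ++ Z ++ Y1 ++ Z ++ Y2) -> q %| size (Z ++ Y1)).
Proof.
have [N1 us_in] := primitive_infix_subst_iter ne prim (in_sigma_lang_inL Lus).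
have [N2 ul_in] := primitive_infix_subst_iter ne prim (in_sigma_lang_inL Lul).
set Z := si (N1 + N2) [:: a0].
have Z_lang : in_sigma_lang sigma Z by exists (N1 + N2), a0; apply: infix_refl.
have [N Z_in] := primitive_infix_subst_iter ne prim Z_lang.
exists Z, N; split=> [//|Y0 Y1 Y2 LY].
have /infixP[l1 [r1 Z_us]] := us_in (N1 + N2) a0 (leq_addr _ _).
have /infixP[l2 [r2 Z_ul]] := ul_in (N1 + N2) a0 (leq_addl _ _).
have Z_at_j : occurs_at Z (Y0 ++ Z ++ Y1 ++ Z ++ Y2) (size (Y0 ++ Z ++ Y1)).
  by have := occurs_at_cat (Y0 ++ Z ++ Y1) Z Y2; rewrite -!catA.
have := dvdn_occurs_at_distance us_max ul_min le_Kus le_Kul coprime_pq LY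
  _ _ (occurs_at_cat Y0 Z _) Z_at_j.
rewrite size_cat addKn; apply; last exact: leq_addr.
  by rewrite /Z Z_us; apply: occurs_at_cat.
by rewrite /Z Z_ul; apply: occurs_at_cat.
Qed.

End RigidBlockExists.

Section RigidBlock.
Variables (A : finType) (sigma : A -> seq A) (q : nat).
Local Notation si := (subst_iter sigma).
Hypothesis ne : nonerasing sigma.
Variables (Z : seq A) (N : nat).
Hypothesis Z_infix : forall n a, N <= n -> infix Z (si n [:: a]).
Hypothesis dvdn_gap : forall Y0 Y1 Y2,
  inL sigma (Y0 ++ Z ++ Y1 ++ Z ++ Y2) -> q %| size (Z ++ Y1).

Lemma return_word_eventually_divides a w :
  return_word sigma a w -> eventually_divides sigma q w.
Proof.
case: w => [|b w] [Lwa]; first by exists 0 => n _; rewrite subst_iter_nil dvdn0.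
rewrite rcons_cons prefix_cons => /andP[/eqP ab _]; subst b; exists N => n le_Nn.
have /infixP[l [r Ea]] := Z_infix a le_Nn.
have -> : size (si n (a :: w)) = size (Z ++ (r ++ si n w ++ l)).
  by rewrite subst_iter_cons Ea !size_cat; lia.
apply: (@dvdn_gap l _ r); have := inL_subst_iter ne n Lwa.
by rewrite rcons_cons -cats1 subst_iter_cons subst_iter_cat Ea -!catA.
Qed.

Lemma letter_eventually_divides a b c :
  inL sigma [:: b; a; c] -> inL sigma [:: b; c] -> eventually_divides sigma q [:: a].
Proof.
move=> Lbac Lbc; exists N => n le_Nn.
have /infixP[lb [rb Eb]] := Z_infix b le_Nn.
have /infixP[lc [rc Ec]] := Z_infix c le_Nn.
have gap_bac : q %| size (Z ++ (rb ++ si n [:: a] ++ lc)).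
  apply: (@dvdn_gap lb _ rc); have := inL_subst_iter ne n Lbac.
  by rewrite -[[:: b; a; c]]/([:: b] ++ [:: a] ++ [:: c]) !subst_iter_cat Eb Ec -!catA.
have gap_bc : q %| size (Z ++ (rb ++ lc)).
  apply: (@dvdn_gap lb _ rc); have := inL_subst_iter ne n Lbc.
  by rewrite -[[:: b; c]]/([:: b] ++ [:: c]) subst_iter_cat Eb Ec -!catA.
move: gap_bac; rewrite (_ : size _ = size (si n [:: a]) + size (Z ++ (rb ++ lc))).
  by rewrite (dvdn_addl _ gap_bc).
by rewrite !size_cat; lia.
Qed.

End RigidBlock.

Theorem theorem1p2 (A : finType) (sigma : A -> seq A) (R : realType)
    (mu : seq A -> R) (v : seq A) (p q : nat) :
  nonerasing sigma ->
  primitive sigma ->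
  invariant_prob_on_X sigma mu ->
  inL sigma v ->
  0 < q -> coprime p q ->
  mu v = (p%:R / q%:R)%R ->
  balanced_on sigma v ->
  (forall (a : A) (w : seq A), return_word sigma a w -> eventually_divides sigma q w)
  /\ (forall a : A, inL sigma [:: a; a] -> eventually_divides sigma q [:: a])
  /\ (forall a b c : A, inL sigma [:: b; a; c] -> inL sigma [:: b; c] ->
        eventually_divides sigma q [:: a]).
Proof.
move=> ne prim mu_inv Lv q_gt0 coprime_pq mu_v [C balanced].
pose P u := inL sigma u /\ size v <= size u.
have P_v : exists u, P u by exists v.
have disc_bnd u : P u -> (`|disc v p q u| <= Posz (q * C))%R.
  by case; apply: disc_bounded mu_inv q_gt0 mu_v balanced u.
have [us [Lus le_us] us_max] := bounded_attains_max P_v disc_bnd.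
have [ul [Lul le_ul] ul_min] := bounded_attains_min P_v disc_bnd.
have [x _] := Lv.
have [Z [N [Z_in Z_gap]]] := rigid_block_exists ne prim coprime_pq Lus Lul le_us le_ul
  (fun u Lu le_u => us_max u (conj Lu le_u)) (fun u Lu le_u => ul_min u (conj Lu le_u)) (x 0%R).
have returns := return_word_eventually_divides ne Z_in Z_gap.
split; first exact: returns.
split; last exact: (letter_eventually_divides ne Z_in Z_gap).
by move=> a Laa; apply: (returns a); split=> //=; rewrite eqxx.
Qed.
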